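(* For every contractor network and every $t\ge2$, $$\|\mathbf m^t-\mathbf m\|\le\Big(1+\frac{2}{1-\|(\mathbf A\mathbf W)^2\|}\Big)\,\|\mathbf r\|\,\|(\mathbf A\mathbf W)^2\|^{\lfloor t/2\rfloor}.$$ Moreover, if $G$ is acyclic (contains no directed cycle, including no self-loop) and $d>0$ denotes the maximum number of edges in a directed path of $G$, then $m_i^t=m_i$ for all $t\ge d$ and all $i\in\mathcal V$.
   Context: A contractor network is a finite directed graph $G=(\mathcal V,\mathcal E)$ with $n=|\mathcal V|$ nodes, without multiple edges (self-loops and directed cycles are allowed in general), in which every node has at least one incident edge. For $i\in\mathcal V$ let $\delta_{\mathrm{in}}(i)=\{j:(j,i)\in\mathcal E\}$ and $\delta_{\mathrm{out}}(i)=\{k:(i,k)\in\mathcal E\}$. A node $i$ is a pure principal if $\delta_{\mathrm{in}}(i)=\emptyset$, a pure obligee if $\delta_{\mathrm{out}}(i)=\emptyset$, and an intermediary otherwise. Each edge $(j,i)\in\mathcal E$ carries a weight $w_{ij}>0$; set $w_{ij}=0$ if $(j,i)\notin\mathcal E$; for every node $i$ with $\delta_{\mathrm{in}}(i)\neq\emptyset$ we have $\sum_{j\in\delta_{\mathrm{in}}(i)}w_{ij}=1$. Let $\mathbf W=(w_{ij})$. Each node has a risk score $r_i$, with $r_i\in(0,1)$ if $i$ is not a pure obligee and $r_i=0$ if $i$ is a pure obligee; $\mathbf r=(r_i)_i$. Propagation parameters: $\alpha_i=0$ for pure principals, $\alpha_i=1$ for pure obligees, $\alpha_i\in(0,1)$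 for intermediaries; $\mathbf A=\mathrm{diag}(\alpha_i)$. The mean failure probabilities are defined by $\mathbf m^0=\mathbf r$ and $\mathbf m^{t+1}=(\mathbf I-\mathbf A)\mathbf r+\mathbf A\mathbf W\mathbf m^t$ (these are $m_i^t=\mathbb E[X_i^t]$ for the failure process where the $X_i^0\sim\mathrm{Bernoulli}(r_i)$ are independent and, conditionally on the past, $X_i^{t+1}\sim\mathrm{Bernoulli}((1-\alpha_i)r_i+\alpha_i\sum_j w_{ij}X_j^t)$ independently over $i$), and $\mathbf m=\lim_t\mathbf m^t=(\mathbf I-\mathbf A\mathbf W)^{-1}(\mathbf I-\mathbf A)\mathbf r$. Norms: $\|\mathbf x\|=\max_i|x_i|$ for vectors and $\|\mathbf M\|$ = induced $\ell_\infty$ norm (maximum absolute row sum) for matrices. *)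

From HB Require Import structures.
From mathcomp Require Import all_boot all_order all_algebra.
Set Implicit Arguments. Unset Strict Implicit. Unset Printing Implicit Defensive.
Import Order.TTheory GRing.Theory Num.Theory.
Local Open Scope ring_scope.

Section ContractorNetwork.
Variables (R : realFieldType) (n : nat).

(* Nodes are 'I_n; E j i means the directed edge (j,i) is in the graph. *)
Definition pure_principal (E : rel 'I_n) (i : 'I_n) : bool := ~~ [exists j, E j i].
Definition pure_obligee (E : rel 'I_n) (i : 'I_n) : bool := ~~ [exists k, E i k].
Definition intermediary (E : rel 'I_n) (i : 'I_n) : bool :=
  ~~ pure_principal E i && ~~ pure_obligee E i.

(* W i j = w_ij, weight of edge (j,i). *)
Definition contractor_network (E : rel 'I_n) (W : 'M[R]_n)
    (r alpha : 'I_n -> R) : Prop :=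
  [/\ (forall i, [exists j, E j i || E i j]),
      (forall i j, E j i -> 0 < W i j),
      (forall i j, ~~ E j i -> W i j = 0) &
      (forall i, [exists j, E j i] -> \sum_j W i j = 1)] /\
  [/\ (forall i, ~~ pure_obligee E i -> 0 < r i < 1) &
      (forall i, pure_obligee E i -> r i = 0)] /\
  [/\ (forall i, pure_principal E i -> alpha i = 0),
      (forall i, pure_obligee E i -> alpha i = 1) &
      (forall i, intermediary E i -> 0 < alpha i < 1)].

Definition Amx (alpha : 'I_n -> R) : 'M[R]_n := diag_mx (\row_i alpha i).
Definition rvec (r : 'I_n -> R) : 'cV[R]_n := \col_i r i.

Fixpoint mseq (W : 'M[R]_n) (r alpha : 'I_n -> R) (t : nat) : 'cV[R]_n :=
  match t with
  | 0 => rvec r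
  | t'.+1 => (1%:M - Amx alpha) *m rvec r + (Amx alpha *m W) *m mseq W r alpha t'
  end.

Definition mlim (W : 'M[R]_n) (r alpha : 'I_n -> R) : 'cV[R]_n :=
  invmx (1%:M - Amx alpha *m W) *m ((1%:M - Amx alpha) *m rvec r).

Definition vnorm (x : 'cV[R]_n) : R := \big[Num.max/0]_(i < n) `|x i 0|.
Definition mnorm (M : 'M[R]_n) : R := \big[Num.max/0]_(i < n) \sum_(j < n) `|M i j|.

Definition acyclic (E : rel 'I_n) : Prop :=
  forall i j : 'I_n, E i j -> ~~ connect E j i.

Definition max_path_length (E : rel 'I_n) (d : nat) : Prop :=
  (exists (x : 'I_n) (p : seq 'I_n), path E x p /\ size p = d) /\
  (forall (x : 'I_n) (p : seq 'I_n), path E x p -> (size p <= d)%N).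

End ContractorNetwork.

From HB Require Import structures.
From mathcomp Require Import all_boot all_order all_algebra.
From mathcomp Require Import lra.
Import Order.TTheory GRing.Theory Num.Theory.
Local Open Scope ring_scope.
Set Implicit Arguments. Unset Strict Implicit.

(* The error e t = m^t - m obeys e (t+1) = (A W) e t.  Since A W is nonnegative with row sums at
   most 1 it does not expand the sup norm, and every row of (A W)^2 sums to strictly less than 1:
   a row of A W sums to 1 only at a node i with alpha i = 1 (a pure obligee), and its suppliers k
   are not pure obligees, so their rows sum to alpha k < 1.  Hence q = ||(A W)^2|| < 1, which gives
   the geometric decay, the invertibility of I - A W and the bound ||m|| <= 2 ||r|| / (1 - q).
   For the acyclic part, e t i <> 0 forces a path of t edges ending at i whose source carries a
   nonzero initial error; the initial error vanishes at pure principals, so that source has a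
   predecessor and the graph has a path of t + 1 edges. *)

Section SupNorm.
Variables (R : realFieldType) (n : nat).
Implicit Types (x y : 'cV[R]_n) (M N : 'M[R]_n).

Lemma vnorm_ge0 x : 0 <= vnorm x.
Proof. exact: bigmax_ge_id. Qed.

Lemma entry_le_vnorm x i : `|x i 0| <= vnorm x.
Proof. exact: (le_bigmax 0 (fun i => `|x i 0|)). Qed.

Lemma vnorm_le x c : 0 <= c -> (forall i, `|x i 0| <= c) -> vnorm x <= c.
Proof. by move=> c_ge0 x_le; apply: bigmax_le. Qed.

Lemma vnorm_le0 x : vnorm x <= 0 -> x = 0.
Proof.
move=> x_le0; apply/matrixP => i j; rewrite mxE (ord1 j); apply/eqP.
by rewrite -normr_le0 (le_trans (entry_le_vnorm x i)).
Qed.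

Lemma vnormD x y : vnorm (x + y) <= vnorm x + vnorm y.
Proof.
apply: vnorm_le => [|i]; first by rewrite addr_ge0 ?vnorm_ge0.
by rewrite mxE (le_trans (ler_normD _ _)) // lerD ?entry_le_vnorm.
Qed.

Lemma vnormN x : vnorm (- x) = vnorm x.
Proof. by apply: eq_bigr => i _; rewrite mxE normrN. Qed.

Lemma mnorm_ge0 M : 0 <= mnorm M.
Proof. exact: bigmax_ge_id. Qed.

Lemma row_le_mnorm M i : \sum_j `|M i j| <= mnorm M.
Proof. exact: (le_bigmax 0 (fun i => \sum_j `|M i j|)). Qed.

Lemma vnorm_mulmx M x : vnorm (M *m x) <= mnorm M * vnorm x.
Proof.
apply: vnorm_le => [|i]; first by rewrite mulr_ge0 ?mnorm_ge0 ?vnorm_ge0.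
rewrite mxE (le_trans (ler_norm_sum _ _ _)) //.
apply: le_trans (_ : \sum_j `|M i j| * vnorm x <= _).
  by apply: ler_sum => j _; rewrite normrM ler_wpM2l ?entry_le_vnorm.
by rewrite -mulr_suml ler_wpM2r ?vnorm_ge0 ?row_le_mnorm.
Qed.

Lemma sum_row_mulmx M N i :
  \sum_j (M *m N) i j = \sum_k M i k * \sum_j N k j.
Proof.
under eq_bigr do rewrite mxE.
by rewrite exchange_big; apply: eq_bigr => k _; rewrite mulr_sumr.
Qed.

End SupNorm.

Section Substochastic.
Variables (R : realFieldType) (n : nat) (B : 'M[R]_n).
Hypotheses (B_ge0 : forall i j, 0 <= B i j) (B_row_le1 : forall i, \sum_j B i j <= 1).

Lemma mnorm_substochastic : mnorm B <= 1.
Proof.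
apply: bigmax_le => // i _.
by under eq_bigr do rewrite ger0_norm ?B_ge0 //; exact: B_row_le1.
Qed.

Lemma mnorm_substochastic_sqr_lt1 :
    (forall i, \sum_j B i j < 1 \/ exists2 k, 0 < B i k & \sum_j B k j < 1) ->
  mnorm (B *m B) < 1.
Proof.
move=> row_leak; apply: bigmax_lt => // i _.
have BB_ge0 j : 0 <= (B *m B) i j by rewrite mxE sumr_ge0 // => k _; rewrite mulr_ge0.
under eq_bigr do rewrite ger0_norm ?BB_ge0 //.
rewrite sum_row_mulmx.
have term_le k : B i k * \sum_j B k j <= B i k by rewrite ler_piMr ?B_ge0.
case: (row_leak i) => [row_lt1 | [k Bik_gt0 rowk_lt1]].
  exact: le_lt_trans (ler_sum _ (fun k _ => term_le k)) row_lt1.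
apply: lt_le_trans (B_row_le1 i).
rewrite (bigD1 k) // [X in _ < X](bigD1 k) //=.
by apply: ltr_leD; [rewrite gtr_pMr | apply: ler_sum].
Qed.

End Substochastic.

Section SquareContraction.
Variables (R : realFieldType) (n : nat) (B : 'M[R]_n).
Let q := mnorm (B *m B).
Hypothesis q_lt1 : q < 1.

Lemma mulmx_1B_eq0 (x : 'cV[R]_n) : (1%:M - B) *m x = 0 -> x = 0.
Proof.
move=> /eqP; rewrite mulmxBl mul1mx subr_eq0 => /eqP x_fix.
have x_fix2 : (B *m B) *m x = x by rewrite -mulmxA -!x_fix.
apply: vnorm_le0.
have : vnorm x <= q * vnorm x by rewrite -{1}x_fix2 vnorm_mulmx.
by rewrite -subr_le0 -{1}[vnorm x]mul1r -mulrBl pmulr_rle0 // subr_gt0.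
Qed.

Lemma unitmx_1B : 1%:M - B \in unitmx.
Proof.
rewrite -unitmx_tr unitmxE unitfE; apply/det0P => -[v v_neq0 v_ker].
have : (1%:M - B) *m v^T = 0 by rewrite -[_ *m _]trmxK trmx_mul trmxK v_ker trmx0.
by move/mulmx_1B_eq0/(congr1 trmx); rewrite trmxK trmx0; apply/eqP.
Qed.

Hypothesis B_le1 : mnorm B <= 1.

Lemma vnorm_iterate (e : nat -> 'cV[R]_n) :
    (forall t, e t.+1 = B *m e t) ->
  forall t, vnorm (e t) <= q ^+ t./2 * vnorm (e 0%N).
Proof.
move=> eS t.
suff : vnorm (e t) <= q ^+ t./2 * vnorm (e 0%N) /\
       vnorm (e t.+1) <= q ^+ t.+1./2 * vnorm (e 0%N) by case.
elim: t => [|t [IH1 IH2]]; split=> //; first by rewrite expr0 mul1r.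
  by rewrite eS expr0 mul1r (le_trans (vnorm_mulmx _ _)) // ler_piMl ?vnorm_ge0.
rewrite !eS mulmxA (le_trans (vnorm_mulmx _ _)) //= -/q exprS -mulrA.
by rewrite ler_wpM2l ?mnorm_ge0.
Qed.

Lemma vnorm_fixpoint (x y : 'cV[R]_n) :
  x = y + B *m x -> vnorm x <= 2 / (1 - q) * vnorm y.
Proof.
move=> x_fix.
have x_fix2 : x = y + B *m y + (B *m B) *m x.
  by rewrite {1}x_fix {1}x_fix mulmxDr mulmxA addrA.
have : vnorm x <= vnorm y + vnorm y + q * vnorm x.
  rewrite {1}x_fix2 (le_trans (vnormD _ _)) // lerD ?vnorm_mulmx //.
  rewrite (le_trans (vnormD _ _)) // lerD // (le_trans (vnorm_mulmx _ _)) //.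
  by rewrite ler_piMl ?vnorm_ge0.
rewrite mulrAC ler_pdivlMr ?subr_gt0 //.
by have := vnorm_ge0 x; nra.
Qed.

End SquareContraction.

Lemma nonzero_entry_path (R : realFieldType) (n : nat) (E : rel 'I_n)
    (B : 'M[R]_n) (e : nat -> 'cV[R]_n) :
    (forall i k, B i k != 0 -> E k i) -> (forall t, e t.+1 = B *m e t) ->
  forall t i, e t i 0 != 0 ->
  exists x p, [/\ path E x p, size p = t, last x p = i & e 0%N x 0 != 0].
Proof.
move=> B_supp eS; elim=> [|t IH] i; first by exists i, [::].
rewrite eS mxE; case: (pickP (fun k => B i k * e t k 0 != 0)) => [k | all0]; last first.
  by rewrite big1 ?eqxx // => k _; apply/eqP/negbFE/all0.
rewrite mulf_eq0 negb_or => /andP[/B_supp Eki /IH[x [p [xp size_p last_p ex]]]] _.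
exists x, (rcons p i); split=> //; last by rewrite last_rcons.
  by rewrite rcons_path xp last_p.
by rewrite size_rcons size_p.
Qed.

Lemma Amx_mulmxE (R : realFieldType) (n : nat) (alpha : 'I_n -> R)
    (W : 'M[R]_n) i j :
  (Amx alpha *m W) i j = alpha i * W i j.
Proof. by rewrite /Amx mul_diag_mx !mxE. Qed.

Lemma Amx_rvecE (R : realFieldType) (n : nat) (alpha r : 'I_n -> R) i :
  ((1%:M - Amx alpha) *m rvec r) i 0 = (1 - alpha i) * r i.
Proof. by rewrite mulmxBl mul1mx /Amx mul_diag_mx !mxE mulrBl mul1r. Qed.

Section ContractorNetwork.
Variables (R : realFieldType) (n : nat) (E : rel 'I_n) (W : 'M[R]_n)
  (r alpha : 'I_n -> R).
Hypothesis net : contractor_network E W r alpha.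

Local Notation AW := (Amx alpha *m W).
Local Notation q := (mnorm (AW *m AW)).
Local Notation y := ((1%:M - Amx alpha) *m rvec r).
Local Notation m := (mlim W r alpha).
Local Notation err t := (mseq W r alpha t - mlim W r alpha).

Lemma alpha_in01 i : 0 <= alpha i <= 1.
Proof.
case: net => _ [_ [a0 a1 a_int]].
case pi: (pure_principal E i); first by rewrite a0 ?pi ?lexx ?ler01.
case oi: (pure_obligee E i); first by rewrite a1 ?oi ?lexx ?ler01.
have /andP[/ltW -> /ltW ->] // : 0 < alpha i < 1.
by apply: a_int; rewrite /intermediary pi oi.
Qed.

Lemma alpha_lt1_supplier k i : E k i -> alpha k < 1.
Proof.
case: net => _ [_ [a0 _ a_int]] Eki.
case pk: (pure_principal E k); first by rewrite a0.
have ok : pure_obligee E k = false by apply/negbTE/negPn/existsP; exists i.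
by have /andP[] // : 0 < alpha k < 1 by apply: a_int; rewrite /intermediary pk ok.
Qed.

Lemma W_ge0 i j : 0 <= W i j.
Proof.
case: net => [[_ W_gt0 W_eq0 _] _].
by case Eji: (E j i); [rewrite ltW ?W_gt0 | rewrite W_eq0 ?Eji].
Qed.

Lemma AW_ge0 i j : 0 <= AW i j.
Proof. by rewrite Amx_mulmxE mulr_ge0 ?W_ge0 //; case/andP: (alpha_in01 i). Qed.

Lemma AW_supp i k : AW i k != 0 -> E k i.
Proof.
case: net => [[_ _ W_eq0 _] _]; rewrite Amx_mulmxE; apply: contraNT => /W_eq0 ->.
by rewrite mulr0.
Qed.

Lemma AW_row_le i : \sum_j AW i j <= alpha i.
Proof.
case: net => [[_ _ W_eq0 W_sum1] _].
under eq_bigr do rewrite Amx_mulmxE; rewrite -mulr_sumr.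
case/andP: (alpha_in01 i) => ai_ge0 _; rewrite ler_piMr //.
case: (boolP [exists j, E j i]) => [/W_sum1 -> // | /existsPn noin].
by rewrite big1 // => j _; rewrite W_eq0.
Qed.

Lemma AW_row_le1 i : \sum_j AW i j <= 1.
Proof. by rewrite (le_trans (AW_row_le i)) //; case/andP: (alpha_in01 i). Qed.

Lemma AW_row_leak i :
  \sum_j AW i j < 1 \/ exists2 k, 0 < AW i k & \sum_j AW k j < 1.
Proof.
case: net => [[_ W_gt0 W_eq0 _] _].
have [ai_lt1 | ai_ge1] := ltP (alpha i) 1.
  by left; exact: le_lt_trans (AW_row_le i) ai_lt1.
have ai1 : alpha i = 1 by apply/eqP; rewrite eq_le ai_ge1 andbT; case/andP: (alpha_in01 i).
case: (boolP [exists k, E k i]) => [/existsP[k Eki] | /existsPn noin].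
  right; exists k; first by rewrite Amx_mulmxE ai1 mul1r W_gt0.
  exact: le_lt_trans (AW_row_le k) (alpha_lt1_supplier Eki).
by left; rewrite big1 ?ltr01 // => j _; rewrite Amx_mulmxE W_eq0 ?mulr0.
Qed.

Lemma mnorm_AW_le1 : mnorm AW <= 1.
Proof. exact: mnorm_substochastic AW_ge0 AW_row_le1. Qed.

Lemma mnorm_AW2_lt1 : q < 1.
Proof. exact: mnorm_substochastic_sqr_lt1 AW_ge0 AW_row_le1 AW_row_leak. Qed.

Lemma mlim_fixpoint : m = y + AW *m m.
Proof.
have : (1%:M - AW) *m m = y by rewrite /mlim mulKVmx ?unitmx_1B ?mnorm_AW2_lt1.
by rewrite mulmxBl mul1mx => <-; rewrite subrK.
Qed.

Lemma errS t : err t.+1 = AW *m err t.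
Proof. by rewrite [in LHS]mlim_fixpoint /= mulmxBr opprD addrACA subrr add0r. Qed.

Lemma vnorm_y_le : vnorm y <= vnorm (rvec r).
Proof.
apply: vnorm_le => [|i]; first exact: vnorm_ge0.
have := entry_le_vnorm (rvec r) i; rewrite Amx_rvecE mxE; apply: le_trans.
case/andP: (alpha_in01 i) => ai_ge0 ai_le1.
by rewrite normrM ger0_norm ?subr_ge0 // ler_piMl // lerBlDr lerDl.
Qed.

Lemma err0_principal x : pure_principal E x -> err 0%N x 0 = 0.
Proof.
case: net => _ [_ [a0 _ _]] /a0 ax0.
have m_x : m x 0 = r x.
  rewrite mlim_fixpoint mxE Amx_rvecE ax0 subr0 mul1r mxE big1 ?addr0 // => k _.
  by rewrite Amx_mulmxE ax0 !mul0r.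
have -> : err 0%N x 0 = r x - m x 0 by rewrite !mxE.
by rewrite m_x subrr.
Qed.

Lemma mseq_sub_mlim_bound t :
  vnorm (err t) <= (1 + 2 / (1 - q)) * vnorm (rvec r) * q ^+ t./2.
Proof.
rewrite mulrC (le_trans (vnorm_iterate mnorm_AW_le1 errS t)) //.
rewrite ler_wpM2l ?exprn_ge0 ?mnorm_ge0 // (le_trans (vnormD _ _)) //= vnormN.
rewrite mulrDl mul1r lerD //.
apply: le_trans (vnorm_fixpoint mnorm_AW2_lt1 mnorm_AW_le1 mlim_fixpoint) _.
by rewrite ler_wpM2l ?vnorm_y_le // divr_ge0 ?subr_ge0 ?ltW ?mnorm_AW2_lt1.
Qed.

Lemma mseq_eq_mlim d :
    (forall x p, path E x p -> (size p <= d)%N) ->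
  forall t i, (d <= t)%N -> mseq W r alpha t i 0 = m i 0.
Proof.
move=> path_le t i d_le_t; apply/eqP; rewrite -subr_eq0.
have -> : mseq W r alpha t i 0 - m i 0 = err t i 0 by rewrite !mxE.
apply: contraLR d_le_t => /(nonzero_entry_path AW_supp errS)[x [p [xp size_p _ ex]]].
have /negPn/existsP[k Ekx] : ~~ pure_principal E x by apply: contra ex => /err0_principal ->.
by rewrite -ltnNge -size_p; apply: (path_le k (x :: p)); rewrite /= Ekx.
Qed.

End ContractorNetwork.

Unset Implicit Arguments. Set Strict Implicit.

Theorem mainTheorem5 (R : realFieldType) (n : nat) (E : rel 'I_n)
    (W : 'M[R]_n) (r alpha : 'I_n -> R) :
  contractor_network E W r alpha ->
  (forall t : nat, (2 <= t)%N ->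
     let AW := Amx alpha *m W in
     let q := mnorm (AW *m AW) in
     vnorm (mseq W r alpha t - mlim W r alpha)
       <= (1 + 2 / (1 - q)) * vnorm (rvec r) * q ^+ (t./2)) /\
  (acyclic E -> forall d : nat, max_path_length E d -> (0 < d)%N ->
     forall t : nat, (d <= t)%N -> forall i : 'I_n,
       mseq W r alpha t i 0 = mlim W r alpha i 0).
Proof.
move=> net; split=> [t _ | _ d [_ path_le] _ t d_le_t i].
  exact: mseq_sub_mlim_bound net t.
exact: (mseq_eq_mlim net path_le i d_le_t).
Qed.
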